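(* Let $n\ge 2$ and let $H_1,\dots,H_n$ be $1$-dimensional linear subspaces (lines through the origin) of $\mathbb{R}^n$ such that (i) at least two of them form an angle that is an irrational multiple of $\pi$; (ii) $H_1+\cdots+H_n=\mathbb{R}^n$; (iii) $\{H_1,\dots,H_n\}$ cannot be partitioned into two nonempty subsets such that every line in the first subset is orthogonal to every line in the second. If $E\subset S^{n-1}$ is nonempty, closed, and satisfies $R_{H_j}E=E$ for $j=1,\dots,n$, then $E=S^{n-1}$.
   Context: For a linear subspace $H$ of $\mathbb{R}^n$, $R_H$ denotes the reflection in $H$, i.e., the map $x\mapsto 2(x|H)-x$, where $x|H$ is the orthogonal projection of $x$ onto $H$. $+$ denotes Minkowski (vector) sum. $S^{n-1}$ is the unit sphere. *)

From HB Require Import structures.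
From mathcomp Require Import all_boot all_order all_algebra.
From mathcomp Require Import all_classical all_reals all_analysis.
Set Implicit Arguments. Unset Strict Implicit. Unset Printing Implicit Defensive.
Import Order.TTheory GRing.Theory Num.Theory.
Import numFieldNormedType.Exports.
Local Open Scope ring_scope.
Local Open Scope classical_set_scope.

Definition dotv {R : realType} {n : nat} (x y : 'rV[R]_n) : R := (x *m y^T) 0 0.

Definition normv {R : realType} {n : nat} (x : 'rV[R]_n) : R := Num.sqrt (dotv x x).

Definition sphere {R : realType} (n : nat) : set 'rV[R]_n := [set x | dotv x x = 1].

Definition line {R : realType} {n : nat} (u : 'rV[R]_n) : set 'rV[R]_n :=
  [set x | exists t : R, x = t *: u].

Definition proj_line {R : realType} {n : nat} (u x : 'rV[R]_n) : 'rV[R]_n :=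
  (dotv x u / dotv u u) *: u.

Definition refl_line {R : realType} {n : nat} (u x : 'rV[R]_n) : 'rV[R]_n :=
  2 *: proj_line u x - x.

Definition line_angle {R : realType} {n : nat} (u v : 'rV[R]_n) : R :=
  acos (`|dotv u v| / (normv u * normv v)).

Definition irrational_multiple_of_pi {R : realType} (t : R) : Prop :=
  ~ exists q : rat, t = ratr q * pi.

(* Two reflections in the lines spanned by unit vectors a and b compose to the
   rotation by 2 acos <a,b> in the plane of a and b.  When acos <a,b> is not a
   rational multiple of pi, the multiples of this angle are dense in the circle,
   so a closed set E invariant under both reflections is invariant under every
   rotation of that plane: with each point x it contains the whole circle
   through x in the affine plane x + span(a, b).  Call this property slice
   invariance along a subspace.

   Slice invariance propagates.  Let E be slice invariant along U, with
   dim U >= 2, and invariant under the reflection in a line u not orthogonal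
   to U.  In a slice x + (U + Ru) of squared radius r, a point of E is
   determined, up to slice invariance along U, by its coordinate k along the
   unit normal e of U in U + Ru.  The reflection in u moves k to any k' with
   s^2 k'^2 + c^2 (k' - k)^2 <= s^2 r, where c and s are the cosine and sine of
   twice the angle between u and U.  A supremum argument on the closed set of
   attained coordinates then shows that every k with k^2 <= r is attained, so
   E is slice invariant along U + Ru.  By irreducibility the lines can be added
   one at a time until U = R^n, and a nonempty subset of the sphere that is
   slice invariant along R^n is the whole sphere. *)

From HB Require Import structures.
From mathcomp Require Import all_boot all_order all_algebra.
From mathcomp Require Import all_classical all_reals all_analysis.
From mathcomp Require Import ring lra.
Set Implicit Arguments. Unset Strict Implicit. Unset Printing Implicit Defensive.
Import Order.TTheory GRing.Theory Num.Theory.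
Import numFieldNormedType.Exports.
Local Open Scope ring_scope.
Local Open Scope classical_set_scope.

Local Notation "<< x , y >>" := (dotv x y).

Section Dotv.
Variables (R : realType) (n : nat).
Implicit Types (x y z : 'rV[R]_n).

Lemma dotvE x y : << x, y >> = \sum_i x 0 i * y 0 i.
Proof. by rewrite /dotv mxE; apply: eq_bigr => i _; rewrite mxE. Qed.

Lemma dotvC x y : << x, y >> = << y, x >>.
Proof. by rewrite !dotvE; apply: eq_bigr => i _; rewrite mulrC. Qed.

Lemma dotvDl x y z : << x + y, z >> = << x, z >> + << y, z >>.
Proof. by rewrite /dotv mulmxDl mxE. Qed.

Lemma dotvDr x y z : << z, x + y >> = << z, x >> + << z, y >>.
Proof. by rewrite dotvC dotvDl !(dotvC z). Qed.

Lemma dotvZl (t : R) x y : << t *: x, y >> = t * << x, y >>.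
Proof. by rewrite /dotv -scalemxAl mxE. Qed.

Lemma dotvZr (t : R) x y : << x, t *: y >> = t * << x, y >>.
Proof. by rewrite dotvC dotvZl dotvC. Qed.

Lemma dotvNl x y : << - x, y >> = - << x, y >>.
Proof. by rewrite -scaleN1r dotvZl mulN1r. Qed.

Lemma dotvNr x y : << x, - y >> = - << x, y >>.
Proof. by rewrite dotvC dotvNl dotvC. Qed.

Lemma dotvBl x y z : << x - y, z >> = << x, z >> - << y, z >>.
Proof. by rewrite dotvDl dotvNl. Qed.

Lemma dotvBr x y z : << z, x - y >> = << z, x >> - << z, y >>.
Proof. by rewrite dotvDr dotvNr. Qed.

Lemma dotv0l x : << 0, x >> = 0.
Proof. by rewrite -(scale0r 0) dotvZl mul0r. Qed.

Lemma dotv0r x : << x, 0 >> = 0.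
Proof. by rewrite dotvC dotv0l. Qed.

Definition dotv_linE := (dotvDl, dotvDr, dotvBl, dotvBr, dotvNl, dotvNr, dotvZl, dotvZr).

Lemma dotvv_ge0 x : 0 <= << x, x >>.
Proof. by rewrite dotvE; apply: sumr_ge0 => i _; rewrite -expr2 sqr_ge0. Qed.

Lemma dotvv_eq0 x : (<< x, x >> == 0) = (x == 0).
Proof.
apply/idP/eqP => [|->]; last by rewrite dotv0r.
rewrite dotvE psumr_eq0 => [/allP x0|i _]; last by rewrite -expr2 sqr_ge0.
apply/rowP => i; rewrite mxE.
by have := x0 _ (mem_index_enum i); rewrite -expr2 sqrf_eq0 => /eqP.
Qed.

Lemma dotvv_gt0 x : (0 < << x, x >>) = (x != 0).
Proof. by rewrite lt_def dotvv_eq0 dotvv_ge0 andbT. Qed.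

Lemma dotv_pythagoras x y : << x, y >> = 0 ->
  << x + y, x + y >> = << x, x >> + << y, y >>.
Proof. by move=> xy; rewrite !dotv_linE (dotvC y x) xy; ring. Qed.

Lemma dotv_cauchy_schwarz x y : << x, y >> ^+ 2 <= << x, x >> * << y, y >>.
Proof.
have [->|y0] := eqVneq y 0; first by rewrite !dotv0r expr0n mulr0.
have yy := dotvv_gt0 y; rewrite y0 in yy.
have := dotvv_ge0 (<< y, y >> *: x - << x, y >> *: y).
rewrite !dotv_linE (dotvC y x); nra.
Qed.

Lemma cs_lt_orth_comb x y z : << x, y >> ^+ 2 < << x, x >> * << y, y >> ->
  exists s t : R, s *: x + t *: y != 0 /\ << s *: x + t *: y, z >> = 0.
Proof.
move=> cs; have [xz|xz] := eqVneq << x, z >> 0.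
  exists 1, 0; rewrite scale1r scale0r addr0; split => //.
  by apply: contraTneq cs => ->; rewrite !dotv0l mul0r expr0n ltxx.
exists << y, z >>, (- << x, z >>); split; last by rewrite !dotv_linE; ring.
apply/eqP => v0.
(* Pairing the vanishing combination with x and y shows that <x,z> times the
   Gram determinant of x, y vanishes. *)
have /= ex := congr1 (dotv^~ x) v0; have /= ey := congr1 (dotv^~ y) v0.
rewrite !dotv_linE dotv0l in ex; rewrite !dotv_linE dotv0l in ey.
have : << x, z >> * (<< x, x >> * << y, y >> - << x, y >> ^+ 2) =
    << x, y >> * (<< y, z >> * << x, x >> + - << x, z >> * << y, x >>)
    - << x, x >> * (<< y, z >> * << x, y >> + - << x, z >> * << y, y >>).
  by rewrite (dotvC y x); ring.
rewrite ex ey !mulr0 subrr => /eqP.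
by rewrite mulf_eq0 (negbTE xz) subr_eq0 (gt_eqF cs).
Qed.

Lemma normv_gt0 x : x != 0 -> 0 < normv x.
Proof. by move=> x0; rewrite sqrtr_gt0 dotvv_gt0. Qed.

Lemma normvK x : normv x ^+ 2 = << x, x >>.
Proof. by rewrite sqr_sqrtr ?dotvv_ge0. Qed.

Lemma dotv_normalize x : x != 0 -> << (normv x)^-1 *: x, (normv x)^-1 *: x >> = 1.
Proof.
move=> x0; rewrite dotvZl dotvZr mulrA -expr2 exprVn normvK mulVf //.
by rewrite dotvv_eq0.
Qed.

Lemma normalizeK x : x != 0 -> normv x *: ((normv x)^-1 *: x) = x.
Proof. by move=> x0; rewrite scalerA mulfV ?scale1r // gt_eqF ?normv_gt0. Qed.

End Dotv.

Section Reflection.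
Variables (R : realType) (n : nat).
Implicit Types (u x y : 'rV[R]_n).

Lemma refl_lineE u x : refl_line u x = (2 * << x, u >> / << u, u >>) *: u - x.
Proof. by rewrite /refl_line /proj_line scalerA mulrA. Qed.

Lemma refl_line_unit u x : << u, u >> = 1 -> refl_line u x = (2 * << x, u >>) *: u - x.
Proof. by move=> uu; rewrite refl_lineE uu divr1. Qed.

Lemma refl_lineD u x y : refl_line u (x + y) = refl_line u x + refl_line u y.
Proof.
rewrite !refl_lineE dotvDl mulrDr mulrDl scalerDl.
by rewrite opprD addrACA.
Qed.

Lemma refl_lineZ u (t : R) x : refl_line u (t *: x) = t *: refl_line u x.
Proof.
by rewrite !refl_lineE dotvZl scalerBr scalerA; congr (_ *: _ - _); ring.
Qed.

Lemma refl_lineB u x y : refl_line u (x - y) = refl_line u x - refl_line u y.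
Proof. by rewrite refl_lineD -scaleN1r refl_lineZ scaleN1r. Qed.

Lemma refl_line_perp u x : << x, u >> = 0 -> refl_line u x = - x.
Proof. by move=> xu; rewrite refl_lineE xu mulr0 mul0r scale0r sub0r. Qed.

Lemma refl_line_dotv u x : u != 0 -> << refl_line u x, u >> = << x, u >>.
Proof.
rewrite -dotvv_gt0 => /lt0r_neq0 uu.
by rewrite refl_lineE dotvBl dotvZl; field.
Qed.

Lemma refl_lineK u : u != 0 -> involutive (refl_line u).
Proof.
move=> u0 x; rewrite [in LHS]refl_lineE refl_line_dotv // refl_lineE.
by rewrite opprB addrC subrK.
Qed.

Lemma refl_line_isometry u x y : u != 0 ->
  << refl_line u x, refl_line u y >> = << x, y >>.
Proof.
rewrite -dotvv_gt0 => /lt0r_neq0 uu.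
rewrite !refl_lineE !dotv_linE (dotvC u y).
by move: << x, u >> << y, u >> << x, y >> << u, u >> uu => a b d c c0; field.
Qed.

Lemma refl_line_scale u (k : R) : k != 0 -> refl_line (k *: u) =1 refl_line u.
Proof.
move=> k0 x; have [->|u0] := eqVneq u 0; first by rewrite scaler0.
have : << u, u >> != 0 by rewrite dotvv_eq0.
rewrite !refl_lineE !(dotvZl, dotvZr) scalerA => uu.
by congr (_ *: _ - _); field; apply/andP.
Qed.

End Reflection.

Section StepFill.
Variable R : realType.
Implicit Types (H : set R) (r s c h t k : R).

Lemma step_room r s c (M t : R) : 0 < s -> s ^+ 2 + c ^+ 2 = 1 ->
  M ^+ 2 <= r -> t ^+ 2 <= r -> M < t ->
  exists2 e, 0 < e & M + e <= t /\ s ^+ 2 * (M + e) ^+ 2 + c ^+ 2 * e ^+ 2 <= s ^+ 2 * r.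
Proof.
move=> s0 sc Mr tr Mt; have s20 : 0 < s ^+ 2 by rewrite exprn_gt0.
have room e : s ^+ 2 * (M + e) ^+ 2 + c ^+ 2 * e ^+ 2 - s ^+ 2 * r
    = e * (2 * s ^+ 2 * M + e) - s ^+ 2 * (r - M ^+ 2).
  have -> : c ^+ 2 = 1 - s ^+ 2 by lra.
  ring.
have [M0|M0] := ltP M 0.
  pose e := Num.min (t - M) (- (2 * s ^+ 2 * M)).
  have e0 : 0 < e by rewrite lt_min subr_gt0 Mt oppr_gt0 /= pmulr_rlt0 ?mulr_gt0.
  have e1 : e <= t - M by rewrite ge_min lexx.
  have e2 : e <= - (2 * s ^+ 2 * M) by rewrite ge_min lexx orbT.
  exists e => //; split; first lra.
  by rewrite -subr_le0 room; nra.
pose D := s ^+ 2 * (r - M ^+ 2).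
have D0 : 0 < D by apply: mulr_gt0 => //; nra.
pose e := Num.min (t - M) (Num.min 1 (D / (2 * s ^+ 2 * M + 1))).
have e0 : 0 < e by rewrite !lt_min subr_gt0 Mt ltr01 divr_gt0 //; nra.
have e1 : e <= t - M by rewrite ge_min lexx.
have e2 : e <= 1 by rewrite !ge_min lexx /= orbT.
have e3 : e <= D / (2 * s ^+ 2 * M + 1) by rewrite !ge_min lexx /= !orbT.
exists e => //; split; first lra.
rewrite -subr_le0 room -/D.
have : e * (2 * s ^+ 2 * M + 1) <= D by rewrite -ler_pdivlMr //; nra.
nra.
Qed.

Lemma closed_sup_mem (A : set R) : closed A -> A !=set0 -> has_ubound A -> A (sup A).
Proof.
by move=> /closure_id cA A0 Aub; rewrite [X in X (sup A)]cA; apply: closure_sup.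
Qed.

Section Fill.
Variables (H : set R) (r s c : R).
Hypotheses (s0 : 0 < s) (sc : s ^+ 2 + c ^+ 2 = 1) (cH : closed H).
Hypothesis H_step : forall k k', k ^+ 2 <= r -> H k ->
  s ^+ 2 * k' ^+ 2 + c ^+ 2 * (k' - k) ^+ 2 <= s ^+ 2 * r -> H k'.

Lemma step_fill_up h t : h ^+ 2 <= r -> t ^+ 2 <= r -> h <= t -> H h -> H t.
Proof.
move=> hr tr ht Hh.
pose A := H `&` ([set k | h <= k] `&` [set k | k <= t]).
have cA : closed A by apply: closedI => //; apply: closedI; [apply: closed_ge | apply: closed_le].
have Ah : A h by split; rewrite /= ?lexx.
have Aub : has_ubound A by exists t => k [_ []].
have [HM [/= hM Mt]] := closed_sup_mem cA (ex_intro _ _ Ah) Aub.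
have [Mt'|tM] := ltP (sup A) t; last first.
  by have /eqP <- : sup A == t by rewrite eq_le Mt tM.
have Mr : sup A ^+ 2 <= r by have [] := leP 0 (sup A); nra.
have [e e0 [et room]] := step_room s0 sc Mr tr Mt'.
have /(sup_upper_bound (conj (ex_intro _ _ Ah) Aub)) : A (sup A + e).
  by split; [apply: (H_step Mr HM); rewrite [_ + e - _]addrC addKr | split => /=; lra].
lra.
Qed.
End Fill.

Lemma step_fill H r s c : 0 < s -> s ^+ 2 + c ^+ 2 = 1 -> closed H ->
  (forall k k', k ^+ 2 <= r -> H k ->
     s ^+ 2 * k' ^+ 2 + c ^+ 2 * (k' - k) ^+ 2 <= s ^+ 2 * r -> H k') ->
  forall h t, h ^+ 2 <= r -> t ^+ 2 <= r -> H h -> H t.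
Proof.
move=> s0 sc cH H_step h t hr tr Hh.
have [ht|th] := leP h t; first exact: (step_fill_up s0 sc cH H_step hr tr ht Hh).
rewrite -[t]opprK; apply: (@step_fill_up (-%R @^-1` H) r s c _ _ _ _ (- h)) => //=.
- exact: (continuous_closedP _).1 opp_continuous _ cH.
- move=> k k' kr Hk st; apply: (H_step (- k)); rewrite ?sqrrN //.
  by rewrite -opprD sqrrN.
- by rewrite sqrrN.
- by rewrite sqrrN.
- by rewrite lerN2 ltW.
- by rewrite opprK.
Qed.

End StepFill.

Section AdditiveSubgroup.
Variables (R : realType) (G : set R).
Hypothesis G_sub : forall x y, G x -> G y -> G (x - y).

Lemma subgroup0 x : G x -> G 0.
Proof. by move=> Gx; rewrite -(subrr x); apply: G_sub. Qed.

Lemma subgroupN x : G x -> G (- x).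
Proof. by move=> Gx; rewrite -sub0r; apply: G_sub => //; apply: subgroup0 Gx. Qed.

Lemma subgroupD x y : G x -> G y -> G (x + y).
Proof. by move=> Gx Gy; rewrite -[y]opprK; apply: G_sub => //; apply: subgroupN. Qed.

Lemma subgroupMz x (k : int) : G x -> G (k%:~R * x).
Proof.
move=> Gx; have Gn (m : nat) : G (m%:R * x).
  elim: m => [|m IH]; first by rewrite mul0r; apply: subgroup0 Gx.
  by rewrite -addn1 natrD mulrDl mul1r; apply: subgroupD.
by case: k => m; rewrite ?NegzE ?intrN ?mulNr; [apply: Gn | apply/subgroupN/Gn].
Qed.

Lemma subgroup_gap_cyclic eps b : 0 < eps -> 0 < b -> G b ->
  (forall g, G g -> 0 < g -> eps <= g) ->
  exists2 m, 0 < m & forall g, G g -> g = (Num.floor (g / m))%:~R * m.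
Proof.
move=> e0 b0 Gb gap.
pose P g := G g /\ 0 < g.
have hinf : has_inf P by split; [exists b | exists eps => g []; apply: gap].
have Pinf g : P g -> inf P <= g by apply: ge_inf; case: hinf.
have m0 : 0 < inf P.
  by apply: (lt_le_trans e0); apply: lb_le_inf => [|g [Gg g0]]; [exists b | apply: gap].
have Pm : P (inf P).
  have [g1 Pg1 g1m] := inf_adherent m0 hinf.
  have [<-//|g1N] := eqVneq g1 (inf P).
  have d0 : 0 < g1 - inf P by rewrite subr_gt0 lt_def g1N Pinf.
  have [g2 Pg2 g2m] := inf_adherent d0 hinf.
  have Pd : P (g1 - g2) by split; [apply: G_sub; [case: Pg1 | case: Pg2] | lra].
  by have := Pinf _ Pd; have := Pinf _ Pg2; lra.
exists (inf P) => // g Gg; set k := Num.floor (g / inf P).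
have r0 : 0 <= g - k%:~R * inf P by rewrite subr_ge0 -ler_pdivlMr // floor_le.
have r1 : g - k%:~R * inf P < inf P.
  by have := floorD1_gt (g / inf P); rewrite -/k intrD ltr_pdivrMr // mulrDl mul1r; lra.
have [/eqP|rN] := eqVneq (g - k%:~R * inf P) 0; first by rewrite subr_eq0 => /eqP.
have : P (g - k%:~R * inf P).
  by split; [apply: G_sub => //; apply: subgroupMz; case: Pm | rewrite lt_def rN].
by move/Pinf; lra.
Qed.

Lemma subgroup_dense a b : 0 < b -> G a -> G b -> ~ (exists q : rat, a = ratr q * b) ->
  forall t eps, 0 < eps -> exists2 g, G g & `|g - t| < eps.
Proof.
move=> b0 Ga Gb irr t eps e0.
have [g [Gg g0 ge]] : exists g, [/\ G g, 0 < g & g < eps].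
  apply: contrapT => small.
  have gap g : G g -> 0 < g -> eps <= g.
    by move=> Gg g0; rewrite leNgt; apply/negP => ge; apply: small; exists g.
  have [m m0 cyc] := subgroup_gap_cyclic e0 b0 Gb gap.
  move: (cyc _ Ga) (cyc _ Gb); set Na := Num.floor _; set Nb := Num.floor _ => aE bE.
  have Nb0 : Nb != 0 by apply: contraTneq b0 => Nb0; rewrite bE Nb0 mul0r ltxx.
  apply: irr; exists (Na%:Q / Nb%:Q).
  by rewrite fmorph_div !rmorph_int bE mulrA divfK ?intr_eq0.
exists ((Num.floor (t / g))%:~R * g); first exact: subgroupMz.
have h1 : (Num.floor (t / g))%:~R * g <= t by rewrite -ler_pdivlMr // floor_le.
have h2 : t < (Num.floor (t / g) + 1)%:~R * g by rewrite -ltr_pdivrMr // floorD1_gt.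
rewrite intrD mulrDl mul1r in h2.
rewrite ler0_norm ?subr_le0 //; lra.
Qed.

End AdditiveSubgroup.

Lemma cos_sin_onto (R : realType) (C S : R) : C ^+ 2 + S ^+ 2 = 1 ->
  exists th, cos th = C /\ sin th = S.
Proof.
move=> CS; have C1 : -1 <= C <= 1 by apply/andP; split; nra.
have cC : cos (acos C) = C by apply: acosK; rewrite in_itv /= C1.
have sC : sin (acos C) = `|S| by rewrite sin_acos // -sqrtr_sqr; congr Num.sqrt; lra.
have [S0|S0] := leP 0 S; first by exists (acos C); rewrite sC ger0_norm.
by exists (- acos C); rewrite cosN sinN sC ltr0_norm ?opprK.
Qed.

Lemma closed_approx (R : realType) (P : set R) t : closed P ->
  (forall eps, 0 < eps -> exists2 g, P g & `|g - t| < eps) -> P t.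
Proof.
move=> cP approx; apply: cP => B /nbhs_ballP [e /= e0 eB].
have [g Pg gt] := approx e e0.
by exists g; split => //; apply: eB; rewrite /ball /= distrC.
Qed.

(* E contains, with each x, the sphere of radius |x| in the affine slice x + U;
   equivalently, E is invariant under the orthogonal group of U extended by the
   identity on U^perp. *)
Definition slice_invariant {R : realType} {n : nat} (U E : set 'rV[R]_n) :=
  forall x y, E x -> U (y - x) -> << y, y >> = << x, x >> -> E y.

Definition span2 {R : realType} {n : nat} (a b : 'rV[R]_n) : set 'rV[R]_n :=
  [set v | exists s t : R, v = s *: a + t *: b].

Lemma slice_invariant_sub (R : realType) (n : nat) (U V E : set 'rV[R]_n) :
  U `<=` V -> slice_invariant V E -> slice_invariant U E.
Proof. by move=> UV hV x y Ex /UV; apply: hV. Qed.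

Lemma slice_invariant_sphere (R : realType) (n : nat) (E : set 'rV[R]_n) :
  slice_invariant [set: 'rV[R]_n] E -> E `<=` @sphere R n -> E !=set0 -> E = @sphere R n.
Proof.
move=> hE Es [x0 Ex0]; apply/seteqP; split => // y y1.
by apply: (hE x0) => //; rewrite y1 (Es _ Ex0).
Qed.

(* For orthonormal p1, p2: the rotation by th in the plane span(p1, p2), which
   fixes the orthogonal complement of that plane. *)
Definition plane_rot {R : realType} {n : nat} (p1 p2 : 'rV[R]_n) (th : R) (x : 'rV[R]_n) :=
  x + ((cos th - 1) * << x, p1 >> - sin th * << x, p2 >>) *: p1
    + (sin th * << x, p1 >> + (cos th - 1) * << x, p2 >>) *: p2.

Section PlaneRotation.
Variables (R : realType) (n : nat) (p1 p2 : 'rV[R]_n).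
Hypotheses (p11 : << p1, p1 >> = 1) (p22 : << p2, p2 >> = 1) (p12 : << p1, p2 >> = 0).
Local Notation rot := (plane_rot p1 p2).

Lemma plane_rot_dotv1 th x : << rot th x, p1 >> = cos th * << x, p1 >> - sin th * << x, p2 >>.
Proof. by rewrite /plane_rot !dotv_linE p11 (dotvC p2 p1) p12; ring. Qed.

Lemma plane_rot_dotv2 th x : << rot th x, p2 >> = sin th * << x, p1 >> + cos th * << x, p2 >>.
Proof. by rewrite /plane_rot !dotv_linE p22 p12; ring. Qed.

Lemma plane_rotD th th' x : rot th (rot th' x) = rot (th + th') x.
Proof.
rewrite [LHS]/plane_rot plane_rot_dotv1 plane_rot_dotv2 /plane_rot cosD sinD.
by apply/rowP => i; rewrite !mxE; ring.
Qed.

Lemma plane_rot_id th x : cos th = 1 -> sin th = 0 -> rot th x = x.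
Proof. by move=> c1 s0; rewrite /plane_rot c1 s0 subrr !mul0r subr0 add0r !scale0r !addr0. Qed.

Lemma plane_rot_continuous x : continuous (rot ^~ x).
Proof.
move=> th; have ss := @continuous_sin R th.
have cc : {for th, continuous (fun t : R => cos t - 1)}.
  exact: cvgB (@continuous_cos R th) (cvg_cst (1 : R)).
have c1 : {for th, continuous (fun t => (cos t - 1) * << x, p1 >> - sin t * << x, p2 >>)}.
  exact: cvgB (cvgM cc (cvg_cst _)) (cvgM ss (cvg_cst _)).
have c2 : {for th, continuous (fun t => sin t * << x, p1 >> + (cos t - 1) * << x, p2 >>)}.
  exact: cvgD (cvgM ss (cvg_cst _)) (cvgM cc (cvg_cst _)).
exact: cvgD (cvgD (cvg_cst x) (cvgZ c1 (cvg_cst p1))) (cvgZ c2 (cvg_cst p2)).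
Qed.

Lemma plane_rot_onto x y : span2 p1 p2 (y - x) -> << y, y >> = << x, x >> ->
  exists th, y = rot th x.
Proof.
move=> [d1 [d2 yx]] yy; have {}yx : y = x + (d1 *: p1 + d2 *: p2) by rewrite -yx addrC subrK.
set X1 := << x, p1 >>; set X2 := << x, p2 >>.
have circle : (X1 + d1) ^+ 2 + (X2 + d2) ^+ 2 = X1 ^+ 2 + X2 ^+ 2.
  move: yy; rewrite yx !dotv_linE p11 p22 (dotvC p2 p1) p12 (dotvC p1 x) (dotvC p2 x).
  rewrite -/X1 -/X2; lra.
set r := X1 ^+ 2 + X2 ^+ 2 in circle.
have [r0|r0] := eqVneq r 0.
  exists 0; rewrite plane_rot_id ?cos0 ?sin0 // yx.
  have sqr0 (a b : R) : a ^+ 2 + b ^+ 2 = 0 -> a = 0 /\ b = 0.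
    by move/eqP; rewrite paddr_eq0 ?sqr_ge0 // !sqrf_eq0 => /andP[/eqP-> /eqP->].
  have [X10 X20] := sqr0 _ _ r0; move: circle; rewrite r0 X10 X20 !add0r.
  by move=> /sqr0[-> ->]; rewrite !scale0r addr0 addr0.
set Y1 := X1 + d1 in circle *; set Y2 := X2 + d2 in circle *.
have lagrange : (X1 * Y1 + X2 * Y2) ^+ 2 + (X1 * Y2 - X2 * Y1) ^+ 2 = r ^+ 2.
  by rewrite [RHS]expr2 -{2}circle /r; ring.
have [th [cth sth]] : exists th, cos th = (X1 * Y1 + X2 * Y2) / r /\
    sin th = (X1 * Y2 - X2 * Y1) / r.
  by apply: cos_sin_onto; rewrite !expr_div_n -mulrDl lagrange divff // expf_neq0.
exists th; rewrite yx /plane_rot cth sth -/X1 -/X2.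
rewrite -addrA; congr (x + (_ *: _ + _ *: _)).
all: by move: r0; rewrite /Y1 /Y2 /r => r0; field.
Qed.

Lemma slice_invariant_plane (E : set 'rV[R]_n) om : closed E ->
  (forall x, E (rot (om *+ 2) x) <-> E x) -> irrational_multiple_of_pi om ->
  slice_invariant (span2 p1 p2) E.
Proof.
move=> cE Eom irr.
pose G := [set t | forall x, E (rot t x) <-> E x].
have G_sub t t' : G t -> G t' -> G (t - t').
  move=> Gt Gt' x; rewrite -Gt' plane_rotD addrC subrK; exact: Gt.
have G2pi : G (pi *+ 2) by move=> x; rewrite plane_rot_id ?cos2pi ?sin2pi.
have pi2 : 0 < pi *+ 2 :> R by rewrite mulrn_wgt0 // pi_gt0.
have irr2 : ~ exists q : rat, om *+ 2 = ratr q * (pi *+ 2).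
  by move=> [q]; rewrite mulrnAr => /eqP; rewrite eqrMn2r /= => /eqP ?; apply: irr; exists q.
move=> x y Ex /plane_rot_onto yx /yx [t ->].
apply: (closed_approx (P := rot ^~ x @^-1` E)) => [|eps e0].
  exact: (continuous_closedP _).1 (@plane_rot_continuous x) _ cE.
have [g Gg gt] := subgroup_dense G_sub pi2 Eom G2pi irr2 t e0.
by exists g => //; apply/Gg.
Qed.

End PlaneRotation.

Section ReflectionPair.
Variables (R : realType) (n : nat) (a b : 'rV[R]_n).
Hypotheses (aa : << a, a >> = 1) (bb : << b, b >> = 1) (ab : << a, b >> ^+ 2 < 1).

Let c := << a, b >>.
Let s := Num.sqrt (1 - c ^+ 2).
Let p2 := s^-1 *: (a - c *: b).

Let s0 : 0 < s. Proof. by rewrite sqrtr_gt0 subr_gt0. Qed.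

Let s2 : s ^+ 2 = 1 - c ^+ 2. Proof. by rewrite sqr_sqrtr // subr_ge0 ltW. Qed.

Let aE : a = c *: b + s *: p2.
Proof. by rewrite scalerA mulfV ?gt_eqF // scale1r addrC subrK. Qed.

Let bp2 : << b, p2 >> = 0.
Proof. by rewrite dotvZr dotvBr dotvZr bb (dotvC b a) mulr1 subrr mulr0. Qed.

Let p2p2 : << p2, p2 >> = 1.
Proof.
rewrite /p2 dotvZl dotvZr mulrA -expr2 exprVn [X in _ * X](_ : _ = s ^+ 2).
  by rewrite mulVf // expf_neq0 ?gt_eqF.
by rewrite !dotv_linE aa bb (dotvC b a) -/c s2; ring.
Qed.

Lemma refl_refl_plane_rot x :
  refl_line a (refl_line b x) = plane_rot b p2 (acos c *+ 2) x.
Proof.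
have c1 : -1 <= c <= 1.
  rewrite -ler_norml ltW // -(expr_lt1 (n := 2)) // real_normK ?num_real //.
have cosE : cos (acos c) = c by apply: acosK; rewrite in_itv /= c1.
have sinE : sin (acos c) = s by rewrite sin_acos.
have cos2 : cos (acos c *+ 2) - 1 = 2 * c ^+ 2 - 2.
  by rewrite mulr2n cosD cosE sinE -expr2 -[s * s]expr2 s2; ring.
have cos2' : cos (acos c *+ 2) - 1 = - 2 * s ^+ 2 by rewrite cos2 s2; ring.
have sin2 : sin (acos c *+ 2) = 2 * s * c by rewrite mulr2n sinD cosE sinE; ring.
have xa : << x, a >> = c * << x, b >> + s * << x, p2 >>.
  by rewrite [in LHS]aE dotvDr !dotvZr.
rewrite /plane_rot {1}cos2 cos2' sin2 (refl_line_unit _ aa) (refl_line_unit _ bb).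
rewrite dotvBl dotvZl (dotvC b a) -/c xa {1}aE.
apply/rowP => i; rewrite !mxE; ring.
Qed.

Lemma slice_invariant_unit_pair (E : set 'rV[R]_n) : closed E ->
  (forall x, E x -> E (refl_line a x)) -> (forall x, E x -> E (refl_line b x)) ->
  irrational_multiple_of_pi (acos c) -> slice_invariant (span2 a b) E.
Proof.
move=> cE hA hB irr.
have a0 : a != 0 by rewrite -dotvv_eq0 aa oner_eq0.
have b0 : b != 0 by rewrite -dotvv_eq0 bb oner_eq0.
apply: (@slice_invariant_sub _ _ _ (span2 b p2)).
  move=> _ [t1 [t2 ->]]; exists (t1 * c + t2), (t1 * s).
  by rewrite aE scalerDr !scalerA addrAC -scalerDl.
apply: (slice_invariant_plane bb p2p2 bp2 cE) irr => x.
rewrite -refl_refl_plane_rot; split => [|/hB/hA //].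
by move=> /hA/hB; rewrite (refl_lineK a0) (refl_lineK b0).
Qed.

End ReflectionPair.

Lemma irrational_multiple_of_pi_supp (R : realType) (t : R) :
  irrational_multiple_of_pi t -> irrational_multiple_of_pi (pi - t).
Proof.
move=> irr [q tq]; apply: irr; exists (1 - q).
by rewrite rmorphB rmorph1 mulrBl mul1r -tq opprB addrC subrK.
Qed.

Section LineAngle.
Variables (R : realType) (n : nat) (a b : 'rV[R]_n).
Hypotheses (a0 : a != 0) (b0 : b != 0).

Let ah := (normv a)^-1 *: a.
Let bh := (normv b)^-1 *: b.

Let line_angleE : line_angle a b = acos `|<< ah, bh >>|.
Proof.
rewrite /line_angle dotvZl dotvZr mulrA -invfM normrM gtr0_norm.
  by rewrite mulrC.
by rewrite invr_gt0 mulr_gt0 ?normv_gt0.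
Qed.

Lemma line_angle_cs_lt : irrational_multiple_of_pi (line_angle a b) ->
  << a, b >> ^+ 2 < << a, a >> * << b, b >>.
Proof.
move=> irr; rewrite lt_neqAle dotv_cauchy_schwarz andbT; apply/eqP => cs.
apply: irr; exists 0; rewrite rmorph0 mul0r /line_angle.
suff -> : `|<< a, b >>| = normv a * normv b by rewrite divff ?acos1 // mulf_neq0 ?gt_eqF ?normv_gt0.
apply/eqP; rewrite -(eqrXn2 (n := 2)) ?mulr_ge0 ?sqrtr_ge0 //.
by rewrite real_normK ?num_real // exprMn !normvK cs.
Qed.

Lemma slice_invariant_pair (E : set 'rV[R]_n) : closed E ->
  (forall x, E x -> E (refl_line a x)) -> (forall x, E x -> E (refl_line b x)) ->
  irrational_multiple_of_pi (line_angle a b) -> slice_invariant (span2 a b) E.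
Proof.
move=> cE hA hB irr.
have ka : (normv a)^-1 != 0 by rewrite invr_eq0 gt_eqF ?normv_gt0.
have kb : (normv b)^-1 != 0 by rewrite invr_eq0 gt_eqF ?normv_gt0.
apply: (@slice_invariant_sub _ _ _ (span2 ah bh)).
  move=> _ [s [t ->]]; exists (s * normv a), (t * normv b).
  by rewrite -!scalerA !normalizeK.
have ab1 : << ah, bh >> ^+ 2 < 1.
  rewrite /ah /bh dotvZl dotvZr mulrA exprMn -invfM exprVn ltr_pdivrMl; last first.
    by rewrite exprn_gt0 // mulr_gt0 ?normv_gt0.
  by rewrite mulr1 exprMn !normvK line_angle_cs_lt.
apply: (slice_invariant_unit_pair (dotv_normalize a0) (dotv_normalize b0) ab1 cE).
- by move=> x; rewrite /ah refl_line_scale //; apply: hA.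
- by move=> x; rewrite /bh refl_line_scale //; apply: hB.
move: irr; rewrite line_angleE; have [c0|c0] := leP 0 << ah, bh >>.
  by rewrite ger0_norm.
have c1 : `|<< ah, bh >>| <= 1.
  by rewrite ltW // -(expr_lt1 (n := 2)) // real_normK ?num_real.
rewrite ltr0_norm // -/ah -/bh => irr.
rewrite -[<< ah, bh >>]opprK acosN; first exact: irrational_multiple_of_pi_supp.
by rewrite -normrN ler_norml in c1.
Qed.

End LineAngle.

Definition lin_subspace {R : realType} {n : nat} (U : set 'rV[R]_n) :=
  [/\ U 0, forall x y, U x -> U y -> U (x + y) & forall (t : R) x, U x -> U (t *: x)].

Definition has_orthoproj {R : realType} {n : nat} (U : set 'rV[R]_n) :=
  forall x, exists2 q, U q & forall w, U w -> << x - q, w >> = 0.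

Definition add_line {R : realType} {n : nat} (U : set 'rV[R]_n) (u : 'rV[R]_n) :=
  [set w + t *: u | w in U & t in [set: R]].

Section Subspace.
Variables (R : realType) (n : nat) (U : set 'rV[R]_n).
Hypothesis hU : lin_subspace U.

Lemma subspaceD x y : U x -> U y -> U (x + y). Proof. by case: hU => _ + _; apply. Qed.

Lemma subspaceZ (t : R) x : U x -> U (t *: x). Proof. by case: hU => _ _; apply. Qed.

Lemma subspaceB x y : U x -> U y -> U (x - y).
Proof. by move=> Ux Uy; rewrite -scaleN1r; apply/subspaceD/subspaceZ. Qed.

Lemma subspace_lincomb (s t : R) x y : U x -> U y -> U (s *: x + t *: y).
Proof. by move=> Ux Uy; apply/subspaceD; apply: subspaceZ. Qed.

End Subspace.

Section SliceExtension.
Variables (R : realType) (n : nat) (U E : set 'rV[R]_n) (f e b : 'rV[R]_n) (al bt : R).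
Hypotheses (hU : lin_subspace U) (hP : has_orthoproj U) (hS : slice_invariant U E).
Hypothesis cE : closed E.
Hypotheses (Uf : U f) (Ub : U b) (ff : << f, f >> = 1) (bb : << b, b >> = 1) (bf : << b, f >> = 0).
Hypotheses (ee : << e, e >> = 1) (eU : forall w, U w -> << w, e >> = 0).
Hypotheses (al0 : 0 < al) (bt0 : 0 < bt).

Let u := al *: f + bt *: e.
Hypothesis hR : forall x, E x -> E (refl_line u x).

(* c and s are the cosine and sine of twice the angle between u and U, so that
   the reflection in u maps f to c f + s e. *)
Let N := al ^+ 2 + bt ^+ 2.
Let c := (al ^+ 2 - bt ^+ 2) / N.
Let s := 2 * al * bt / N.

Let N0 : N != 0. Proof. by rewrite gt_eqF // addr_gt0 ?exprn_gt0. Qed.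

Let s0 : 0 < s. Proof. by rewrite divr_gt0 ?mulr_gt0 // addr_gt0 ?exprn_gt0. Qed.

Let sc : s ^+ 2 + c ^+ 2 = 1.
Proof. by apply: (mulIf (expf_neq0 2 N0)); rewrite mul1r /s /c /N; field. Qed.

Let fe : << f, e >> = 0. Proof. exact: eU. Qed.
Let be : << b, e >> = 0. Proof. exact: eU. Qed.

Let uu : << u, u >> = N.
Proof. by rewrite /u !dotv_linE ff ee (dotvC e f) fe /N; ring. Qed.

Let u0 : u != 0. Proof. by rewrite -dotvv_eq0 uu. Qed.

Let refl_f : refl_line u f = c *: f + s *: e.
Proof.
rewrite refl_lineE uu /u !dotv_linE ff fe /c /s.
by apply/rowP => i; rewrite !mxE /N; field.
Qed.

Let refl_b : refl_line u b = - b.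
Proof. by apply: refl_line_perp; rewrite /u !dotv_linE bf be; ring. Qed.

Section Fiber.
Variables (z : 'rV[R]_n) (r : R).
Hypotheses (zU : forall w, U w -> << z, w >> = 0) (ze : << z, e >> = 0).

(* z is the component of a point orthogonal to U + Re, r the squared radius of its
   slice, and Q k the representative of the points of the slice with
   e-coordinate k. *)
Let Q (k : R) : 'rV[R]_n := z + Num.sqrt (r - k ^+ 2) *: b + k *: e.

Lemma fiber_norm v k : U v ->
  << z + v + k *: e, z + v + k *: e >> = << z, z >> + << v, v >> + k ^+ 2.
Proof.
move=> Uv; rewrite dotv_pythagoras; last by rewrite dotvZr dotvDl ze eU // addr0 mulr0.
by rewrite (dotv_pythagoras (zU Uv)) dotvZl dotvZr ee mulr1 expr2.
Qed.

Lemma fiber_iff v k : U v -> << v, v >> + k ^+ 2 = r ->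
  E (z + v + k *: e) <-> E (Q k).
Proof.
move=> Uv vk; have k2 : k ^+ 2 <= r by rewrite -vk lerDr dotvv_ge0.
have Ub' : U (Num.sqrt (r - k ^+ 2) *: b) by apply: subspaceZ.
have nQ : << Q k, Q k >> = << z + v + k *: e, z + v + k *: e >>.
  rewrite !fiber_norm // dotvZl dotvZr bb mulr1 -expr2 sqr_sqrtr ?subr_ge0 //.
  by rewrite -vk addrK.
have dQ : Q k - (z + v + k *: e) = Num.sqrt (r - k ^+ 2) *: b - v.
  by apply/rowP => i; rewrite !mxE; ring.
split => [Ez|EQ].
- by apply: (hS Ez) nQ; rewrite dQ; apply: subspaceB.
- by apply: (hS EQ) (esym nQ); rewrite -opprB dQ opprB; apply: subspaceB.
Qed.

(* Since R_u f = c f + s e, a point q of the slice with e-coordinate k' = k + mu s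
   differs from Q k by mu (R_u f) plus a multiple of b, which R_u negates, as
   long as (mu c)^2 + k'^2 <= r; then R_u q - R_u (Q k) lies in U. *)
Let fiber_step k k' : k ^+ 2 <= r -> E (Q k) ->
  s ^+ 2 * k' ^+ 2 + c ^+ 2 * (k' - k) ^+ 2 <= s ^+ 2 * r -> E (Q k').
Proof.
move=> kr EQ step; pose mu := (k' - k) / s.
have muE : mu * s = k' - k by rewrite divfK ?gt_eqF.
pose L := Num.sqrt (r - k' ^+ 2 - (mu * c) ^+ 2).
have L2 : L ^+ 2 = r - k' ^+ 2 - (mu * c) ^+ 2.
  rewrite sqr_sqrtr // -(pmulr_rge0 _ (exprn_gt0 2 s0)).
  have -> : s ^+ 2 * (r - k' ^+ 2 - (mu * c) ^+ 2) =
      s ^+ 2 * r - (s ^+ 2 * k' ^+ 2 + c ^+ 2 * (k' - k) ^+ 2) by rewrite -muE; ring.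
  by rewrite subr_ge0.
pose v := L *: b + (mu * c) *: f.
have Uv : U v by apply: subspace_lincomb.
have vv : << v, v >> + k' ^+ 2 = r.
  have -> : r = L ^+ 2 + (mu * c) ^+ 2 + k' ^+ 2 by rewrite L2; ring.
  by rewrite !dotv_linE bb ff (dotvC f b) bf; ring.
apply/(fiber_iff Uv vv); set q := z + v + k' *: e.
have dq : refl_line u q - refl_line u (Q k) = mu *: f + (Num.sqrt (r - k ^+ 2) - L) *: b.
  rewrite -refl_lineB [q - _](_ : _ = (L - Num.sqrt (r - k ^+ 2)) *: b + mu *: refl_line u f).
    rewrite refl_lineD !refl_lineZ refl_b (refl_lineK u0).
    by apply/rowP => i; rewrite !mxE; ring.
  rewrite refl_f /q /v /Q (_ : k' = k + mu * s); last by rewrite muE addrC subrK.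
  by apply/rowP => i; rewrite !mxE; ring.
have nq : << refl_line u q, refl_line u q >> = << refl_line u (Q k), refl_line u (Q k) >>.
  have Ub' : U (Num.sqrt (r - k ^+ 2) *: b) by apply: subspaceZ.
  rewrite !refl_line_isometry // /q /Q !fiber_norm // dotvZl dotvZr bb mulr1.
  by rewrite -expr2 sqr_sqrtr ?subr_ge0 // -vv; ring.
rewrite -(refl_lineK u0 q); apply: hR; apply: (hS (hR EQ) _ nq).
by rewrite dq; apply: subspace_lincomb.
Qed.

Lemma fiber_fill h t : h ^+ 2 <= r -> t ^+ 2 <= r -> E (Q h) -> E (Q t).
Proof.
apply: (@step_fill _ (Q @^-1` E) r s c s0 sc _ fiber_step).
apply: (continuous_closedP _).1 _ _ cE => k.
have sq : {for k, continuous (fun k : R => Num.sqrt (r - k ^+ 2))}.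
  apply: continuous_comp (@sqrt_continuous R _).
  exact: cvgB (cvg_cst _) (@exprn_continuous R 2 k).
exact: cvgD (cvgD (cvg_cst z) (cvgZ sq (cvg_cst b))) (cvgZ cvg_id (cvg_cst e)).
Qed.

End Fiber.

Lemma slice_invariant_add_frame : slice_invariant (add_line U u) E.
Proof.
move=> x y Ex [w Uw [t _ yx]] yy; have [qx Uqx qxP] := hP x.
pose h := << x, e >>; pose z := x - qx - h *: e.
have zU w' : U w' -> << z, w' >> = 0.
  by move=> Uw'; rewrite /z dotvBl qxP // dotvC dotvZr eU // mulr0 subr0.
have ze : << z, e >> = 0 by rewrite /z !dotvBl dotvZl ee (eU Uqx) mulr1 subr0 subrr.
have xE : x = z + qx + h *: e by apply/rowP => i; rewrite !mxE; ring.
pose vy := qx + w + (t * al) *: f; pose ky := h + t * bt.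
have Uvy : U vy by apply: (subspaceD hU (subspaceD hU Uqx Uw)); apply: subspaceZ.
have yE : y = z + vy + ky *: e.
  rewrite -[y](subrK x) -yx xE /vy /ky /u; apply/rowP => i; rewrite !mxE; ring.
pose r := << x, x >> - << z, z >>.
have xr : << qx, qx >> + h ^+ 2 = r by rewrite /r xE fiber_norm //; ring.
have yr : << vy, vy >> + ky ^+ 2 = r by rewrite /r -yy yE fiber_norm //; ring.
have sqr_le (v : 'rV[R]_n) k : << v, v >> + k ^+ 2 = r -> k ^+ 2 <= r.
  by move=> <-; rewrite lerDr dotvv_ge0.
rewrite yE; apply/(fiber_iff zU ze Uvy yr).
apply: (fiber_fill zU ze (sqr_le _ _ xr) (sqr_le _ _ yr)).
by apply/(fiber_iff zU ze Uqx xr); rewrite -xE.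
Qed.

End SliceExtension.

Lemma slice_invariant_add_line (R : realType) (n : nat) (U E : set 'rV[R]_n) u :
  lin_subspace U -> has_orthoproj U -> slice_invariant U E -> closed E ->
  (forall x, E x -> E (refl_line u x)) -> (exists2 w, U w & << u, w >> != 0) ->
  (exists a b, [/\ U a, U b & << a, b >> ^+ 2 < << a, a >> * << b, b >>]) ->
  slice_invariant (add_line U u) E.
Proof.
move=> hU hP hS cE hR [w Uw uw] [a [b [Ua Ub cs]]].
have [p Up pP] := hP u; set e := u - p in pP.
have [e0|e0] := eqVneq e 0.
  apply: slice_invariant_sub hS => _ [v Uv [t _ <-]].
  by rewrite -[u](subrK p) -/e e0 add0r; apply: (subspaceD hU Uv (subspaceZ hU t Up)).
have p0 : p != 0.
  by apply: contraNneq uw => p0; apply/eqP; rewrite -(pP _ Uw) /e p0 subr0.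
have [s [t [v0 vp]]] := cs_lt_orth_comb p cs.
set v := s *: a + t *: b in v0 vp.
have uE : u = normv p *: ((normv p)^-1 *: p) + normv e *: ((normv e)^-1 *: e).
  by rewrite !normalizeK // addrC subrK.
rewrite uE in hR *.
apply: (slice_invariant_add_frame (b := (normv v)^-1 *: v)) hR => //.
- exact: (subspaceZ hU _ Up).
- exact: (subspaceZ hU _ (subspace_lincomb hU s t Ua Ub)).
- exact: dotv_normalize.
- exact: dotv_normalize.
- by rewrite dotvZl dotvZr vp !mulr0.
- exact: dotv_normalize.
- by move=> w' Uw'; rewrite dotvZr dotvC pP // mulr0.
- exact: normv_gt0.
- exact: normv_gt0.
Qed.

Lemma has_orthoproj_add_line (R : realType) (n : nat) (U : set 'rV[R]_n) u :
  lin_subspace U -> has_orthoproj U -> has_orthoproj (add_line U u).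
Proof.
move=> hU hP x; have [pu Upu puP] := hP u; have [q Uq qP] := hP x.
set wv := u - pu in puP; set lam := << x - q, wv >> / << wv, wv >>.
have lamP : << x - q, wv >> = lam * << wv, wv >>.
  have [/eqP|wv0] := eqVneq << wv, wv >> 0; last by rewrite divfK.
  by rewrite dotvv_eq0 => /eqP ->; rewrite !dotv0r mulr0.
exists (q + lam *: wv).
  exists (q - lam *: pu); first exact: (subspaceB hU Uq (subspaceZ hU _ Upu)).
  by exists lam => //; rewrite /wv; apply/rowP => i; rewrite !mxE; ring.
move=> _ [w Uw [t _ <-]]; rewrite opprD addrA -[u](subrK pu) -/wv.
clearbody lam wv; move: (x - q) qP lamP => d qP lamP.
by rewrite !dotv_linE (qP _ Uw) (qP _ Upu) (puP _ Uw) (puP _ Upu) lamP; ring.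
Qed.

Definition span_of {R : realType} {n : nat} (u : 'I_n -> 'rV[R]_n) (S : {set 'I_n}) :=
  [set \sum_(k in S) c k *: u k | c in [set: 'I_n -> R]].

Section Span.
Variables (R : realType) (n : nat) (u : 'I_n -> 'rV[R]_n).
Implicit Type S : {set 'I_n}.

Lemma span_of_subspace S : lin_subspace (span_of u S).
Proof.
split.
- by exists (fun _ => 0) => //; rewrite big1 // => k _; rewrite scale0r.
- move=> _ _ [c _ <-] [d _ <-]; exists (c \+ d) => //.
  by rewrite -big_split; apply: eq_bigr => k _; rewrite scalerDl.
- move=> t _ [c _ <-]; exists (fun k => t * c k) => //.
  by rewrite scaler_sumr; apply: eq_bigr => k _; rewrite scalerA.
Qed.

Lemma span_of_mem S i : i \in S -> span_of u S (u i).
Proof.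
move=> iS; exists (fun k => (k == i)%:R) => //.
rewrite (bigD1 i) //= eqxx scale1r big1 ?addr0 // => k /andP[_ /negbTE ->].
by rewrite scale0r.
Qed.

Lemma span_of_setU1 S j : j \notin S -> span_of u (j |: S) = add_line (span_of u S) (u j).
Proof.
move=> jS; apply/seteqP; split => [_ [c _ <-]|_ [_ [c _ <-] [t _ <-]]].
  by rewrite big_setU1 //= addrC; exists (\sum_(k in S) c k *: u k); [exists c | exists (c j)].
exists (fun k => if k == j then t else c k) => //.
rewrite big_setU1 //= eqxx addrC; congr (_ + _); apply: eq_bigr => k kS.
by case: eqP kS => // ->; rewrite (negbTE jS).
Qed.

Lemma span_of_orthoproj S : has_orthoproj (span_of u S).
Proof.
elim: {S}#|S| {-2}S (eqxx #|S|) => [|m IH] S.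
  rewrite cards_eq0 => /eqP -> x; exists 0; first by exists (fun _ => 0); rewrite ?big_set0.
  by move=> _ [c _ <-]; rewrite big_set0 dotv0r.
have [->|[j jS]] := set_0Vmem S; first by rewrite cards0.
rewrite (cardsD1 j) jS add1n eqSS => hm.
rewrite -(finset.setD1K jS) span_of_setU1 ?finset.setD11 //.
by apply: has_orthoproj_add_line; [apply: span_of_subspace | apply: IH].
Qed.

Lemma span_of_set2 i j : span_of u [set i; j] `<=` span2 (u i) (u j).
Proof.
move=> _ [c _ <-]; have [<-|ij] := eqVneq i j.
  by rewrite finset.setUid big_set1; exists (c i), 0; rewrite scale0r addr0.
by rewrite big_setU1 ?big_set1 ?inE //=; exists (c i), (c j).
Qed.

End Span.

Section Irreducible.
Variables (R : realType) (n : nat) (u : 'I_n -> 'rV[R]_n) (E : set 'rV[R]_n).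
Hypothesis u_irred : forall S : {set 'I_n}, S != finset.set0 -> ~: S != finset.set0 ->
  exists i j, [/\ i \in S, j \notin S & << u i, u j >> != 0].
Hypotheses (cE : closed E) (hR : forall j x, E x -> E (refl_line (u j) x)).
Variables (i0 j0 : 'I_n).
Hypothesis cs : << u i0, u j0 >> ^+ 2 < << u i0, u i0 >> * << u j0, u j0 >>.

Lemma slice_invariant_span_setT (S : {set 'I_n}) : i0 \in S -> j0 \in S ->
  slice_invariant (span_of u S) E -> slice_invariant (span_of u [set: 'I_n]) E.
Proof.
elim: {S}#|~: S| {-2}S (eqxx #|~: S|) => [|k IH] S hk iS jS hS.
  move: hk; rewrite cards_eq0 => /eqP SC.
  by rewrite -(finset.setCK S) SC finset.setC0 in hS.
have SC : ~: S != finset.set0 by rewrite -cards_eq0 (eqP hk).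
have S0 : S != finset.set0 by apply/set0Pn; exists i0.
have [i [j [iS' jS' uij]]] := u_irred S0 SC.
apply: (IH (j |: S)); rewrite ?finset.setU1r //.
  have -> : ~: (j |: S) = ~: S :\ j by apply/setP => x; rewrite !inE negb_or andbC.
  by move: hk; rewrite (cardsD1 j) inE jS' add1n eqSS.
rewrite span_of_setU1 //; apply: slice_invariant_add_line => //.
- exact: span_of_subspace.
- exact: span_of_orthoproj.
- exact: hR.
- by exists (u i); [apply: span_of_mem | rewrite dotvC].
- by exists (u i0), (u j0); split => //; apply: span_of_mem.
Qed.

End Irreducible.

Unset Implicit Arguments.

Theorem theorem3p2 (R : realType) (n : nat) (hn : (2 <= n)%N)
  (u : 'I_n -> 'rV[R]_n) (hu : forall j, u j != 0)
  (h_irr : exists i j : 'I_n, irrational_multiple_of_pi (line_angle (u i) (u j)))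
  (h_span : forall x : 'rV[R]_n,
      exists c : 'I_n -> R, x = \sum_(j < n) c j *: u j)
  (h_irred : forall S : {set 'I_n}, S != finset.set0 -> ~: S != finset.set0 ->
      exists i j, [/\ i \in S, j \notin S & dotv (u i) (u j) != 0])
  (E : set 'rV[R]_n)
  (hEsub : E `<=` @sphere R n) (hE0 : E !=set0) (hEcl : closed E)
  (hEinv : forall j, refl_line (u j) @` E = E) :
  E = @sphere R n.
Proof.
have hR j x : E x -> E (refl_line (u j) x) by move=> Ex; rewrite -(hEinv j); exists x.
have [i0 [j0 irr]] := h_irr.
have h2 : slice_invariant (span_of u [set i0; j0]) E.
  apply: (slice_invariant_sub (@span_of_set2 _ _ u i0 j0)).
  exact: (slice_invariant_pair (hu i0) (hu j0) hEcl (hR i0) (hR j0) irr).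
have hS := slice_invariant_span_setT h_irred hEcl hR (line_angle_cs_lt (hu i0) (hu j0) irr)
  (finset.setU11 _ _) (finset.setU1r _ (finset.set11 _)) h2.
apply: slice_invariant_sphere hEsub hE0; apply: slice_invariant_sub hS => x _.
have [c ->] := h_span x; exists c => //.
by apply: eq_bigl => k; rewrite finset.in_setT.
Qed.
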